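(* Let $(X,\mathcal{A},\mu)$ be a probability space and $f:X\to X$ a measurable map with $f\mu=\mu$. Consider the nonautonomous system with $X_n=X$, $f_n=f$, $\mu_n=\mu$ for all $n$, and let $\mathcal{F}$ be the set of all constant sequences $\mathcal{P}_n\equiv\mathcal{P}$ of finite measurable partitions $\mathcal{P}$ of $X$. Then $h_{\mathcal{E}(\mathcal{F})}(f_{1,\infty})=h_\mu(f)$, where $h_\mu(f)$ is the classical Kolmogorov–Sinai entropy.
   Context: For a sequence $\{\mathcal{P}_n\}$ of finite measurable partitions, $h(f_{1,\infty};\mathcal{P}_{1,\infty})=\limsup_n\frac1nH_{\mu}(\bigvee_{i=0}^{n-1}f^{-i}\mathcal{P}_{i+1})$, $H_\mu(\mathcal{P})=-\sum_P\mu(P)\log\mu(P)$; $h_{\mathcal{E}}(f_{1,\infty})=\sup_{\mathcal{P}_{1,\infty}\in\mathcal{E}}h(f_{1,\infty};\mathcal{P}_{1,\infty})$. An admissible class is a nonempty class $\mathcal{E}$ of sequences of finite measurable partitions such that (A) each member has uniformly bounded cardinalities; (B) it is closed under passing to termwise coarser sequences; (C) $\mathcal{P}_{1,\infty}\in\mathcal{E}$, $m\ge1$ imply $\{\bigvee_{i=0}^{m-1}f_k^{-i}\mathcal{P}_{k+i}\}_{k\ge1}\in\mathcal{E}$ where $f_k^{-i}$ is the preimage under $f_{k+i-1}\circ\cdots\circ f_k$. $\mathcal{E}(\mathcal{F})$ is the smallest admissible class containing $\mathcal{F}$ (the intersection of all admissible classes containing $\mathcal{F}$). *)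

From HB Require Import structures.
From mathcomp Require Import all_boot all_order all_algebra.
From mathcomp Require Import all_classical all_reals all_analysis.
Set Implicit Arguments. Unset Strict Implicit. Unset Printing Implicit Defensive.
Import Order.TTheory GRing.Theory Num.Theory.
Import numFieldNormedType.Exports.
Local Open Scope classical_set_scope.
Local Open Scope ring_scope.

Section Partitions.
Context {d : measure_display} {T : measurableType d} {R : realType}.

Definition is_fmpart (P : set (set T)) : Prop :=
  [/\ finite_set P,
      (forall A, P A -> measurable A),
      (forall A, P A -> A !=set0),
      (forall A B, P A -> P B -> A `&` B !=set0 -> A = B)
    & \bigcup_(A in P) A = setT].

Definition coarser (Q P : set (set T)) : Prop :=
  forall A, P A -> exists2 B, Q B & A `<=` B.

Definition pjoin (P Q : set (set T)) : set (set T) :=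
  [set C | exists A B, [/\ P A, Q B, C = A `&` B & C !=set0]].

Definition ppre (g : T -> T) (P : set (set T)) : set (set T) :=
  [set C | exists A, [/\ P A, C = g @^-1` A & C !=set0]].

Fixpoint bigjoin (n : nat) (Q : nat -> set (set T)) : set (set T) :=
  match n with
  | 0 => [set setT]
  | m.+1 => pjoin (bigjoin m Q) (Q m)
  end.

Definition pentropy (mu : probability T R) (P : set (set T)) : R :=
  (\sum_(A \in P) (- (fine (mu A) * ln (fine (mu A)))))%R.

(* Sequences of partitions P_{1,oo} are encoded as s : nat -> set (set T),
   with s k standing for P_{k+1}. *)
Definition is_fmpart_seq (s : nat -> set (set T)) : Prop :=
  forall n, is_fmpart (s n).

Definition seq_entropy (mu : probability T R) (f : T -> T)
    (s : nat -> set (set T)) : \bar R :=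
  limn_esup (fun n => ((n%:R)^-1 * pentropy mu
                         (bigjoin n (fun i => ppre (iter i f) (s i))))%:E).

Definition class_entropy (mu : probability T R) (f : T -> T)
    (E : set (nat -> set (set T))) : \bar R :=
  ereal_sup [set seq_entropy mu f s | s in E].

Definition admissible (f : T -> T) (E : set (nat -> set (set T))) : Prop :=
  [/\ E !=set0,
      (forall s, E s -> is_fmpart_seq s),
      (forall s, E s -> exists N : nat, forall n, exists c : seq (set T),
          (size c <= N)%N /\ s n = [set` c]),
      (forall s t, E s -> is_fmpart_seq t -> (forall n, coarser (t n) (s n)) ->
          E t)
    & (* (C) closed under \/_{i=0}^{m-1} f_k^{-i} P_{k+i} *)
      (forall s m, E s -> (1 <= m)%N ->
          E (fun k => bigjoin m (fun i => ppre (iter i f) (s (k + i)%N))))].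

Definition gen_class (f : T -> T) (F : set (nat -> set (set T)))
    : set (nat -> set (set T)) :=
  [set s | forall E, admissible f E -> F `<=` E -> E s].

Definition ks_entropy_part (mu : probability T R) (f : T -> T)
    (P : set (set T)) : \bar R :=
  limn (fun n : nat => ((n%:R)^-1 * pentropy mu
                         (bigjoin n (fun i => ppre (iter i f) P)))%:E).

Definition ks_entropy (mu : probability T R) (f : T -> T) : \bar R :=
  ereal_sup [set ks_entropy_part mu f P | P in is_fmpart].

Definition const_fmpart_seqs : set (nat -> set (set T)) :=
  [set s | exists2 P, is_fmpart P & s = fun _ => P].

End Partitions.

From HB Require Import structures.
From mathcomp Require Import all_boot all_order all_algebra.
From mathcomp Require Import all_classical all_reals all_analysis.
From mathcomp Require Import lra.
Unset Printing Implicit Defensive.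
Import Order.TTheory GRing.Theory Num.Theory.
Import numFieldNormedType.Exports.
Local Open Scope classical_set_scope.
Local Open Scope ring_scope.

(* Since [f] preserves [mu], [n |-> H(P^n)] with [P^n = \/_{i<n} f^-i P] is
   subadditive, so by Fekete's lemma [H(P^n)/n] converges: the limsup defining
   the entropy of the constant sequence [P] is the Kolmogorov-Sinai entropy
   [h_mu(f, P)].  As constant sequences lie in [E(F)], this gives [>=].
   Conversely, the sequences whose terms are all coarser than one fixed
   partition [P] form an admissible class (condition (C) turns such a sequence
   into one dominated by [P^m]) containing [F]; hence every member of [E(F)] is
   dominated by some [P], and since entropy grows under refinement its entropy
   is at most [h_mu(f, P)]. *)

Section NegXlnX.
Variable R : realType.
Implicit Types x y p a b : R.

Definition negxlnx x := - (x * ln x).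

Lemma negxlnx0 : negxlnx 0 = 0.
Proof. by rewrite /negxlnx mul0r oppr0. Qed.

Lemma negxlnx_ge0 x : 0 <= x <= 1 -> 0 <= negxlnx x.
Proof. by move=> /andP[x0 x1]; rewrite oppr_ge0 mulr_ge0_le0 // ln_le0. Qed.

Lemma ln_le_subr1 {y} : 0 < y -> ln y <= y - 1.
Proof.
move=> y0; have := @le_ln1Dx _ (y - 1).
rewrite addrCA subrr addr0; apply; lra.
Qed.

(* [ln (a b / p) <= a b / p - 1], multiplied by [p]. *)
Lemma xln_ratio_ge p a b : 0 <= p -> p <= a -> p <= b ->
  p - a * b <= p * ln p - p * ln a - p * ln b.
Proof.
move=> p0 pa pb; have [->|p_neq0] := eqVneq p 0.
  by rewrite !mul0r !subrr sub0r oppr_le0 mulr_ge0 // (le_trans p0).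
have pp : 0 < p by rewrite lt_neqAle eq_sym p_neq0.
have ap : 0 < a := lt_le_trans pp pa.
have bp : 0 < b := lt_le_trans pp pb.
have abp : 0 < a * b / p by rewrite divr_gt0 ?mulr_gt0.
have := ler_wpM2l p0 (ln_le_subr1 abp).
rewrite ln_div ?posrE ?mulr_gt0 // lnM ?posrE //.
have -> : p * (a * b / p - 1) = a * b - p.
  by rewrite mulrBr mulr1 mulrCA mulfV ?gt_eqF // mulr1.
rewrite !mulrDr !mulrN; lra.
Qed.

Lemma ler_sum_mem (I : eqType) (r : seq I) (F : I -> R) (x : I) :
  x \in r -> (forall i, i \in r -> 0 <= F i) -> F x <= \sum_(i <- r) F i.
Proof.
move=> xr F0; rewrite (big_rem x) //= lerDl big_seq sumr_ge0 // => i /mem_rem.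
exact: F0.
Qed.

Lemma negxlnx_sum_le (I : eqType) (r : seq I) (p : I -> R) :
  (forall i, i \in r -> 0 <= p i) ->
  negxlnx (\sum_(i <- r) p i) <= \sum_(i <- r) negxlnx (p i).
Proof.
move=> p0; rewrite /negxlnx mulr_suml -sumrN big_seq [leRHS]big_seq.
apply: ler_sum => i ir; rewrite lerN2.
have [->|pi0] := eqVneq (p i) 0; first by rewrite !mul0r.
have pp : 0 < p i by rewrite lt_neqAle eq_sym pi0 p0.
apply: ler_wpM2l; first exact: ltW.
have le_sum : p i <= \sum_(j <- r) p j by exact: ler_sum_mem.
by rewrite ler_ln ?posrE ?(lt_le_trans pp).
Qed.

(* Summing [xln_ratio_ge] over all pairs, the left-hand side is [1 - 1 = 0]. *)
Lemma negxlnx_sum2_le (I J : eqType) (si : seq I) (sj : seq J)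
    (p : I -> J -> R) :
  (forall i j, i \in si -> j \in sj -> 0 <= p i j) ->
  \sum_(i <- si) \sum_(j <- sj) p i j = 1 ->
  \sum_(i <- si) \sum_(j <- sj) negxlnx (p i j) <=
  \sum_(i <- si) negxlnx (\sum_(j <- sj) p i j) +
  \sum_(j <- sj) negxlnx (\sum_(i <- si) p i j).
Proof.
move=> p0 p1.
set a := fun i => \sum_(j <- sj) p i j; set b := fun j => \sum_(i <- si) p i j.
have gibbs : \sum_(i <- si) \sum_(j <- sj) (p i j - a i * b j) <=
    \sum_(i <- si) \sum_(j <- sj)
      (p i j * ln (p i j) - p i j * ln (a i) - p i j * ln (b j)).
  rewrite big_seq [leRHS]big_seq; apply: ler_sum => i ir.
  rewrite big_seq [leRHS]big_seq; apply: ler_sum => j jr.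
  apply: xln_ratio_ge; first exact: p0.
    by apply: ler_sum_mem => // j' j'r; apply: p0.
  by apply: (ler_sum_mem _ _ (fun i => p i j)) => // i' i'r; apply: p0.
have sum_gibbs0 : \sum_(i <- si) \sum_(j <- sj) (p i j - a i * b j) = 0.
  under eq_bigr do rewrite sumrB -mulr_sumr.
  by rewrite sumrB -mulr_suml p1 /b exchange_big /= p1 mulr1 subrr.
have ea : \sum_(i <- si) negxlnx (a i) =
    \sum_(i <- si) \sum_(j <- sj) - (p i j * ln (a i)).
  by apply: eq_bigr => i _; rewrite /negxlnx /a mulr_suml sumrN.
have eb : \sum_(j <- sj) negxlnx (b j) =
    \sum_(i <- si) \sum_(j <- sj) - (p i j * ln (b j)).
  rewrite exchange_big; apply: eq_bigr => j _.
  by rewrite /negxlnx mulr_suml sumrN.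
rewrite ea eb -subr_ge0 -big_split -sumrB /=.
rewrite sum_gibbs0 in gibbs; apply: le_trans gibbs _.
rewrite le_eqVlt; apply/orP; left; apply/eqP/eq_bigr => i _.
rewrite -big_split -sumrB /=; apply: eq_bigr => j _.
rewrite /negxlnx; lra.
Qed.

End NegXlnX.
Arguments negxlnx {R} x.

Section Fekete.
Variable R : realType.
Variable a : nat -> R.
Hypothesis a_ge0 : forall n, 0 <= a n.
Hypothesis a_subadd : forall m n, a (m + n)%N <= a m + a n.

Lemma subadd_mulnD q k r : a (q * k + r)%N <= q%:R * a k + a r.
Proof.
elim: q => [|q IH]; first by rewrite mul0n add0n mul0r add0r.
rewrite mulSn -addnA (le_trans (a_subadd _ _)) // mulrSr mulrDl mul1r.
by rewrite -addrA addrC -addrA lerD2l addrC.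
Qed.

(* Writing [n = q (k+1) + r] with [r <= k], [a n / n <= a (k+1) / (k+1) + C / n]
   where [C] bounds [a] on [[0, k]]. *)
Lemma fekete : cvgn (fun n => n%:R^-1 * a n).
Proof.
pose E := [set (n.+1%:R)^-1 * a n.+1 | n in [set: nat]].
have Einf : has_inf E.
  split; first by exists (1%:R^-1 * a 1), 0%N.
  by exists 0 => _ [n _ <-]; rewrite mulr_ge0 // invr_ge0.
apply/cvg_ex; exists (inf E); apply/cvgrPdist_le => e e0.
have [_ [k _ <-] near_inf] := inf_adherent (divr_gt0 e0 (ltr0n _ 2)) Einf.
pose C := \sum_(i < k.+1) a i.
near=> n.
have n_gt0 : (0 < n)%N by near: n; exact: nbhs_infty_ge.
have nC : 2 * C / e <= n%:R by near: n; exact: nbhs_infty_ger.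
have inf_le : inf E <= n%:R^-1 * a n.
  by apply: ge_inf; [exact: Einf.2 | exists n.-1; rewrite ?prednK].
rewrite distrC ger0_norm ?subr_ge0 // lerBlDl.
have := ltn_mod n k.+1; have := divn_eq n k.+1.
set q := (n %/ k.+1)%N; set r := (n %% k.+1)%N => n_qr r_lt.
have ar : a r <= C.
  by rewrite /C (bigD1 (Ordinal r_lt)) //= lerDl sumr_ge0.
have qk : q%:R * k.+1%:R <= n%:R :> R by rewrite -natrM ler_nat n_qr leq_addr.
have ninv_ge0 : 0 <= n%:R^-1 :> R by rewrite invr_ge0.
have split_n : n%:R^-1 * a n <= k.+1%:R^-1 * a k.+1 + n%:R^-1 * C.
  have := ler_wpM2l ninv_ge0 (subadd_mulnD q k.+1 r); rewrite -n_qr.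
  move=> /le_trans; apply; rewrite mulrDr.
  apply: lerD; [|by apply: ler_wpM2l].
  rewrite mulrA ler_wpM2r // mulrC ler_pdivrMr ?ltr0n //.
  by rewrite ler_pdivlMl ?ltr0n // mulrC.
have C_small : n%:R^-1 * C <= e / 2.
  rewrite ler_pdivrMr ?ltr0n // in nC.
  by rewrite mulrC ler_pdivrMr ?ltr0n // mulrAC ler_pdivlMr // mulrC; lra.
apply: (le_trans split_n); apply: le_trans (lerD (ltW near_inf) C_small) _.
by rewrite -addrA -splitr.
Unshelve. all: end_near.
Qed.

End Fekete.

Lemma le_limn_esup (R : realType) (u v : nat -> \bar R) :
  (forall n, u n <= v n)%E -> (limn_esup u <= limn_esup v)%E.
Proof.
move=> uv; rewrite !limn_esup_lim; apply: lee_lim; try exact: is_cvg_esups.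
apply: nearW => n; apply: ge_ereal_sup => _ [k nk <-].
by apply: le_trans (uv k) _; apply: ereal_sup_ubound; exists k.
Qed.

Section Partitions.
Context {d : measure_display} {T : measurableType d}.
Implicit Types (P Q S : set (set T)) (g h : T -> T).

Lemma coarser_refl P : coarser P P.
Proof. by move=> A PA; exists A. Qed.

Lemma coarser_trans P Q S : coarser P Q -> coarser Q S -> coarser P S.
Proof.
move=> PQ QS C SC; have [B QB CB] := QS C SC; have [A PA BA] := PQ B QB.
by exists A => //; apply: subset_trans BA.
Qed.

Lemma coarser_pjoinl P Q : coarser P (pjoin P Q).
Proof. by move=> C [A [B [PA QB -> _]]]; exists A => //; apply: subIsetl. Qed.

Lemma coarser_pjoinr P Q : coarser Q (pjoin P Q).
Proof. by move=> C [A [B [PA QB -> _]]]; exists B => //; apply: subIsetr. Qed.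

Lemma pjoin_coarsest P Q S : (forall C, S C -> C !=set0) ->
  coarser P S -> coarser Q S -> coarser (pjoin P Q) S.
Proof.
move=> S_ne PS QS C SC; have [A PA CA] := PS C SC; have [B QB CB] := QS C SC.
have CAB : C `<=` A `&` B by move=> x Cx; split; [exact: CA | exact: CB].
exists (A `&` B) => //; exists A, B; split => //.
by have [x Cx] := S_ne C SC; exists x; apply: CAB.
Qed.

Lemma bigjoin_coarsest n (Q : nat -> set (set T)) S :
  (forall C, S C -> C !=set0) ->
  (forall i, (i < n)%N -> coarser (Q i) S) -> coarser (bigjoin n Q) S.
Proof.
move=> S_ne; elim: n => [|n IH] QS /=; first by move=> C SC; exists setT.
apply: pjoin_coarsest => //; last exact: QS.
by apply: IH => i /ltnW; apply: QS.
Qed.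

Lemma coarser_bigjoin {n} (Q : nat -> set (set T)) {i} : (i < n)%N ->
  coarser (Q i) (bigjoin n Q).
Proof.
elim: n => [//|n IH]; rewrite ltnS leq_eqVlt => /orP[/eqP ->|/IH Qi] /=.
  exact: coarser_pjoinr.
exact: coarser_trans Qi (coarser_pjoinl _ _).
Qed.

Lemma ppre_coarser g {P Q} : coarser P Q -> coarser (ppre g P) (ppre g Q).
Proof.
move=> PQ C [B [QB -> [x Bx]]]; have [A PA BA] := PQ B QB.
exists (g @^-1` A); last by move=> y; apply: BA.
by exists A; split => //; exists x; exact: BA.
Qed.

Lemma ppre_comp_coarser g h P : coarser (ppre (g \o h) P) (ppre h (ppre g P)).
Proof.
move=> C [D [[A [PA -> _]] -> C_ne]]; exists (h @^-1` (g @^-1` A)) => //.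
by exists A.
Qed.

Section FiniteMeasurablePartition.
Context {P : set (set T)} (fP : is_fmpart P).

Lemma fmpart_fin : finite_set P. Proof. by case: fP. Qed.

Lemma fmpart_meas {A} : P A -> measurable A.
Proof. by case: fP => _ mP _ _ _; apply: mP. Qed.

Lemma fmpart_neq0 {A} : P A -> A !=set0.
Proof. by case: fP => _ _ neP _ _; apply: neP. Qed.

Lemma fmpart_disj {A B} : P A -> P B -> A `&` B !=set0 -> A = B.
Proof. by case: fP => _ _ _ dP _; apply: dP. Qed.

Lemma fmpart_cover x : exists2 A, P A & A x.
Proof.
case: fP => _ _ _ _ cov; have : [set: T] x by [].
by rewrite -cov => -[A PA Ax]; exists A.
Qed.

End FiniteMeasurablePartition.

Lemma fmpart_pjoin {P Q} : is_fmpart P -> is_fmpart Q -> is_fmpart (pjoin P Q).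
Proof.
move=> fP fQ; split.
- apply: (@sub_finite_set _ _ ((fun AB => AB.1 `&` AB.2) @` (P `*` Q))).
    by move=> C [A [B [PA QB -> _]]]; exists (A, B).
  by apply/finite_image/finite_setX; apply: fmpart_fin.
- move=> C [A [B [PA QB -> _]]].
  by apply: measurableI; [exact: fmpart_meas PA | exact: fmpart_meas QB].
- by move=> C [A [B [_ _ _ C_ne]]].
- move=> C1 C2 [A1 [B1 [PA1 QB1 -> _]]] [A2 [B2 [PA2 QB2 -> _]]].
  move=> [x [[A1x B1x] [A2x B2x]]].
  rewrite (fmpart_disj fP PA1 PA2); last by exists x.
  by rewrite (fmpart_disj fQ QB1 QB2) //; exists x.
- apply/seteqP; split => // x _.
  have [A PA Ax] := fmpart_cover fP x; have [B QB Bx] := fmpart_cover fQ x.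
  by exists (A `&` B) => //; exists A, B; split => //; exists x.
Qed.

Lemma fmpart_ppre g P :
  (forall A, measurable A -> measurable (g @^-1` A)) ->
  is_fmpart P -> is_fmpart (ppre g P).
Proof.
move=> mg fP; split.
- apply: (@sub_finite_set _ _ (preimage g @` P)).
    by move=> C [A [PA -> _]]; exists A.
  exact/finite_image/fmpart_fin.
- by move=> C [A [PA -> _]]; apply/mg/(fmpart_meas fP PA).
- by move=> C [A [_ _ C_ne]].
- move=> C1 C2 [A1 [PA1 -> _]] [A2 [PA2 -> _]] [x [A1gx A2gx]].
  by rewrite (fmpart_disj fP PA1 PA2) //; exists (g x).
- apply/seteqP; split => // x _.
  have [A PA Agx] := fmpart_cover fP (g x).
  by exists (g @^-1` A) => //; exists A; split => //; exists x.
Qed.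

Lemma fmpart_setT : [set: T] !=set0 -> is_fmpart [set [set: T]].
Proof.
move=> T_ne; split.
- exact: finite_set1.
- by move=> A ->.
- by move=> A ->.
- by move=> A B -> ->.
- by apply/seteqP; split => // x _; exists setT.
Qed.

Lemma fmpart_bigjoin n (Q : nat -> set (set T)) : [set: T] !=set0 ->
  (forall i, is_fmpart (Q i)) -> is_fmpart (bigjoin n Q).
Proof.
move=> T_ne fQ; elim: n => [|n IH] /=; first exact: fmpart_setT.
exact: fmpart_pjoin.
Qed.

Lemma coarser_pjoin_id {P Q} : is_fmpart P -> is_fmpart Q -> coarser P Q ->
  pjoin P Q = Q.
Proof.
move=> fP fQ PQ; apply/seteqP; split.
  move=> C [A [B [PA QB -> [x [Ax Bx]]]]]; have [A' PA' BA'] := PQ B QB.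
  have AA' : A `&` A' !=set0 by exists x; split => //; apply: BA'.
  by rewrite (fmpart_disj fP PA PA' AA') setIidr.
move=> B QB; have [A PA BA] := PQ B QB.
by exists A, B; split; rewrite ?setIidr //; apply: fmpart_neq0 QB.
Qed.

(* A coarser partition is the image of the finer one under a choice of
   enclosing cell. *)
Lemma coarser_fmpart_card P Q cP : is_fmpart P -> is_fmpart Q ->
  coarser Q P -> P = [set` cP] ->
  exists c : seq (set T), (size c <= size cP)%N /\ Q = [set` c].
Proof.
move=> fP fQ QP eP.
have /choice[g Pg] : forall A, exists B, P A -> Q B /\ A `<=` B.
  move=> A; have [PA|nPA] := pselect (P A); last by exists set0.
  by have [B QB AB] := QP A PA; exists B.
exists (map g cP); rewrite size_map; split => //; apply/seteqP; split.
  move=> C QC; have [x Cx] := fmpart_neq0 fQ QC.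
  have [A PA Ax] := fmpart_cover fP x; have [QgA AgA] := Pg A PA.
  rewrite /= (fmpart_disj fQ QC QgA); last by exists x; split => //; apply: AgA.
  by apply: map_f; move: PA; rewrite eP.
by move=> _ /mapP[A Ac ->]; apply: (Pg A _).1; rewrite eP.
Qed.

Definition dominated_seqs : set (nat -> set (set T)) :=
  [set s | is_fmpart_seq s /\
           exists2 P, is_fmpart P & forall n, coarser (s n) P].

End Partitions.

Section Entropy.
Context {d : measure_display} {T : measurableType d} {R : realType}.
Variable mu : probability T R.
Implicit Types (P Q : set (set T)) (g : T -> T).

Lemma fine_mu_le1 A : measurable A -> fine (mu A) <= 1.
Proof.
by move=> mA; rewrite -lee_fin fineK ?fin_num_measure ?probability_le1.
Qed.

Lemma fine_mu_partition {A Q} : measurable A -> is_fmpart Q ->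
  fine (mu A) = \sum_(B \in Q) fine (mu (A `&` B)).
Proof.
move=> mA fQ; have mAQ B : Q B -> measurable (A `&` B).
  by move=> QB; apply: measurableI => //; exact: fmpart_meas QB.
have eA : A = \bigcup_(B in Q) (A `&` B).
  by case: fQ => _ _ _ _ cov; rewrite -setI_bigcupr cov setIT.
rewrite [in LHS]eA measure_fin_bigcup //; last 2 first.
- exact: fmpart_fin.
- move=> B1 B2 QB1 QB2 [x [[_ B1x] [_ B2x]]].
  by apply: (fmpart_disj fQ) => //; exists x.
rewrite (eq_fsbigr (fun B => (fine (mu (A `&` B)))%:E)).
  by rewrite fsumEFin //; exact: fmpart_fin.
by move=> B; rewrite inE => QB; rewrite fineK // fin_num_measure //; exact: mAQ.
Qed.

Lemma fine_mu_partition_sum1 {Q} :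
  is_fmpart Q -> \sum_(B \in Q) fine (mu B) = 1.
Proof.
move=> fQ; have := fine_mu_partition measurableT fQ.
rewrite probability_setT /=.
by under eq_fsbigr do rewrite setTI.
Qed.

Lemma pentropy_ge0 P : is_fmpart P -> 0 <= pentropy mu P.
Proof.
move=> fP; apply: fsumr_ge0 => A PA; apply: negxlnx_ge0.
by rewrite fine_ge0 ?measure_ge0 // fine_mu_le1 //; exact: fmpart_meas PA.
Qed.

Lemma negxlnx_mu_set0 : negxlnx (fine (mu set0)) = 0.
Proof. by rewrite measure0 negxlnx0. Qed.

Lemma pentropy_pjoin P Q : is_fmpart P -> is_fmpart Q ->
  pentropy mu (pjoin P Q) =
  \sum_(A \in P) \sum_(B \in Q) negxlnx (fine (mu (A `&` B))).
Proof.
move=> fP fQ.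
pose D := [set AB : set T * set T | (P `*` Q) AB /\ AB.1 `&` AB.2 !=set0].
have eJ : pjoin P Q = (fun AB => AB.1 `&` AB.2) @` D.
  apply/seteqP; split; first by move=> C [A [B [PA QB -> C_ne]]]; exists (A, B).
  by move=> C [[A B] [[PA QB] C_ne] <-]; exists A, B.
rewrite /pentropy eJ fsbig_image /=; last first.
  move=> [A1 B1] [A2 B2]; rewrite !inE /=.
  move=> -[[PA1 QB1] [x [A1x B1x]]] [[PA2 QB2] _] e.
  rewrite /= in PA1 QB1 PA2 QB2.
  have [A2x B2x] : (A2 `&` B2) x by rewrite -e.
  rewrite (fmpart_disj fP PA1 PA2); last by exists x.
  by rewrite (fmpart_disj fQ QB1 QB2) //; exists x.
rewrite pair_fsbig; [|exact: fmpart_fin fP|exact: fmpart_fin fQ].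
apply: (fsbig_widen D (P `*` Q)); first by move=> AB [].
move=> [A B] [PQ nD]; have AB0 : A `&` B = set0.
  by apply/nonemptyPn => AB_ne; apply: nD.
by rewrite /= AB0; exact: negxlnx_mu_set0.
Qed.

Lemma pentropy_ppre g P :
  (forall A, measurable A -> measurable (g @^-1` A)) ->
  (forall A, measurable A -> mu (g @^-1` A) = mu A) ->
  is_fmpart P -> pentropy mu (ppre g P) = pentropy mu P.
Proof.
move=> mg gmu fP.
pose D := [set A | P A /\ g @^-1` A !=set0].
have eJ : ppre g P = preimage g @` D.
  apply/seteqP; split; first by move=> C [A [PA -> C_ne]]; exists A.
  by move=> C [A [PA C_ne] <-]; exists A.
rewrite /pentropy eJ fsbig_image /=; last first.
  move=> A1 A2; rewrite !inE => -[PA1 [x A1gx]] [PA2 _] /= e.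
  have A2gx : (g @^-1` A2) x by rewrite -e.
  by rewrite (fmpart_disj fP PA1 PA2) //; exists (g x).
rewrite (eq_fsbigr (fun A => negxlnx (fine (mu A)))); last first.
  by move=> A; rewrite inE => -[PA _]; rewrite gmu //; exact: fmpart_meas PA.
apply: (fsbig_widen D P); first by move=> A [].
move=> A [PA nD]; have gA0 : g @^-1` A = set0.
  by apply/nonemptyPn => gA_ne; apply: nD.
by rewrite /= -(gmu A (fmpart_meas fP PA)) gA0; exact: negxlnx_mu_set0.
Qed.

Lemma ler_fsum (I : choiceType) (S : set I) (F G : I -> R) : finite_set S ->
  (forall i, S i -> F i <= G i) -> \sum_(i \in S) F i <= \sum_(i \in S) G i.
Proof.
move=> fS FG; rewrite !fsbig_finite // big_seq [leRHS]big_seq.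
by apply: ler_sum => i; rewrite in_fset_set // inE; exact: FG.
Qed.

Lemma negxlnx_fsum2_le (I J : choiceType) (S1 : set I) (S2 : set J)
    (p : I -> J -> R) : finite_set S1 -> finite_set S2 ->
  (forall i j, S1 i -> S2 j -> 0 <= p i j) ->
  \sum_(i \in S1) \sum_(j \in S2) p i j = 1 ->
  \sum_(i \in S1) \sum_(j \in S2) negxlnx (p i j) <=
  \sum_(i \in S1) negxlnx (\sum_(j \in S2) p i j) +
  \sum_(j \in S2) negxlnx (\sum_(i \in S1) p i j).
Proof.
move=> f1 f2 p0 p1.
rewrite !(fsbig_finite _ _ f1) !(fsbig_finite _ _ f2).
under eq_bigr do rewrite (fsbig_finite _ _ f2).
under [X in _ <= X + _]eq_bigr do rewrite (fsbig_finite _ _ f2).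
under [X in _ <= _ + X]eq_bigr do rewrite (fsbig_finite _ _ f1).
apply: negxlnx_sum2_le.
  by move=> i j; rewrite !in_fset_set // !inE; exact: p0.
rewrite -p1 (fsbig_finite _ _ f1); apply: eq_bigr => i _.
by rewrite (fsbig_finite _ _ f2).
Qed.

Lemma pentropy_le_pjoin P Q : is_fmpart P -> is_fmpart Q ->
  pentropy mu P <= pentropy mu (pjoin P Q).
Proof.
move=> fP fQ; rewrite pentropy_pjoin //.
apply: ler_fsum; first exact: fmpart_fin.
move=> A PA /=; rewrite -[leLHS]/(negxlnx (fine (mu A))).
rewrite (fine_mu_partition (fmpart_meas fP PA) fQ).
rewrite !(fsbig_finite _ _ (fmpart_fin fQ)).
by apply: negxlnx_sum_le => B _; exact: fine_ge0.
Qed.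

Lemma le_pentropy_coarser {P Q} : is_fmpart P -> is_fmpart Q -> coarser P Q ->
  pentropy mu P <= pentropy mu Q.
Proof.
by move=> fP fQ PQ; rewrite -(coarser_pjoin_id fP fQ PQ) pentropy_le_pjoin.
Qed.

Lemma pentropy_pjoin_le {P Q} : is_fmpart P -> is_fmpart Q ->
  pentropy mu (pjoin P Q) <= pentropy mu P + pentropy mu Q.
Proof.
move=> fP fQ; rewrite pentropy_pjoin //.
have -> : pentropy mu P =
    \sum_(A \in P) negxlnx (\sum_(B \in Q) fine (mu (A `&` B))).
  apply: eq_fsbigr => A; rewrite inE => PA.
  by rewrite -fine_mu_partition //; exact: fmpart_meas PA.
have -> : pentropy mu Q =
    \sum_(B \in Q) negxlnx (\sum_(A \in P) fine (mu (A `&` B))).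
  apply: eq_fsbigr => B; rewrite inE => QB.
  under eq_fsbigr do rewrite setIC.
  by rewrite -fine_mu_partition //; exact: fmpart_meas QB.
apply: negxlnx_fsum2_le; [exact: fmpart_fin fP|exact: fmpart_fin fQ| |].
  by move=> A B _ _; exact: fine_ge0.
rewrite -(fine_mu_partition_sum1 fP); apply: eq_fsbigr => A; rewrite inE => PA.
by rewrite -fine_mu_partition //; exact: fmpart_meas PA.
Qed.

End Entropy.

Section InvariantMeasure.
Context {d : measure_display} {T : measurableType d} {R : realType}.
Variables (mu : probability T R) (f : T -> T).
Hypothesis mf : measurable_fun setT f.
Hypothesis finv : forall A, measurable A -> mu (f @^-1` A) = mu A.
Implicit Types (P : set (set T)) (s : nat -> set (set T)).

Lemma measurable_preimage A : measurable A -> measurable (f @^-1` A).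
Proof. by move=> mA; rewrite -[f @^-1` A]setTI; apply: mf. Qed.

Lemma measurable_iter_preimage i A :
  measurable A -> measurable (iter i f @^-1` A).
Proof.
elim: i A => [//|i IH] A mA.
by apply: (IH (f @^-1` A)); apply: measurable_preimage.
Qed.

Lemma iter_preimage_invariant i A :
  measurable A -> mu (iter i f @^-1` A) = mu A.
Proof.
elim: i A => [//|i IH] A mA.
by rewrite -(finv A mA); apply: (IH (f @^-1` A)); apply: measurable_preimage.
Qed.

Lemma setT_neq0 : [set: T] !=set0.
Proof.
apply: contrapT => /nonemptyPn T0; have := probability_setT mu.
by rewrite T0 measure0 => /eqP; rewrite eqe eq_sym oner_eq0.
Qed.

Definition orbit_join P n := bigjoin n (fun i => ppre (iter i f) P).

Lemma fmpart_ppre_iter i {P} : is_fmpart P -> is_fmpart (ppre (iter i f) P).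
Proof. by apply: fmpart_ppre => A; apply: measurable_iter_preimage. Qed.

Lemma fmpart_orbit_join {P} n : is_fmpart P -> is_fmpart (orbit_join P n).
Proof.
by move=> fP; apply: fmpart_bigjoin setT_neq0 _ => i; apply: fmpart_ppre_iter.
Qed.

Lemma orbit_join_splitD {P} m n : is_fmpart P ->
  coarser (orbit_join P (m + n))
          (pjoin (orbit_join P m) (ppre (iter m f) (orbit_join P n))).
Proof.
move=> fP; apply: bigjoin_coarsest.
  apply: fmpart_neq0; apply: fmpart_pjoin; first exact: fmpart_orbit_join.
  by apply: fmpart_ppre_iter; exact: fmpart_orbit_join.
move=> i lt_imn; have [lt_im|le_mi] := ltnP i m.
  exact: coarser_trans (coarser_bigjoin _ lt_im) (coarser_pjoinl _ _).
have -> : iter i f = iter (i - m) f \o iter m f.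
  by apply: funext => x; rewrite /= -iterD subnK.
apply: coarser_trans (ppre_comp_coarser _ _ _) _.
apply: coarser_trans _ (coarser_pjoinr _ _); apply: ppre_coarser.
by apply: (coarser_bigjoin (fun i => ppre (iter i f) P)); rewrite ltn_subLR.
Qed.

Lemma pentropy_orbit_joinD P m n : is_fmpart P ->
  pentropy mu (orbit_join P (m + n)) <=
  pentropy mu (orbit_join P m) + pentropy mu (orbit_join P n).
Proof.
move=> fP; have fPm := fmpart_orbit_join m fP.
have fPn := fmpart_ppre_iter m (fmpart_orbit_join n fP).
apply: le_trans (le_pentropy_coarser mu (fmpart_orbit_join _ fP)
  (fmpart_pjoin fPm fPn) (orbit_join_splitD m n fP)) _.
apply: le_trans (pentropy_pjoin_le mu fPm fPn) _.
rewrite pentropy_ppre //.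
- by move=> A; apply: measurable_iter_preimage.
- by move=> A; apply: iter_preimage_invariant.
- exact: fmpart_orbit_join.
Qed.

Lemma seq_entropy_const {P} : is_fmpart P ->
  seq_entropy mu f (fun _ => P) = ks_entropy_part mu f P.
Proof.
move=> fP; rewrite /seq_entropy /ks_entropy_part is_cvg_limn_esupE //.
have /cvg_ex[l Pl] : cvgn (fun n => n%:R^-1 * pentropy mu (orbit_join P n)).
  apply: fekete => [n|m n]; first exact/pentropy_ge0/fmpart_orbit_join.
  exact: pentropy_orbit_joinD.
by apply/cvg_ex; exists l%:E; apply: cvg_EFin; [exact: nearW | exact: Pl].
Qed.

Lemma coarser_orbit_join s P n : is_fmpart P -> (forall i, coarser (s i) P) ->
  coarser (bigjoin n (fun i => ppre (iter i f) (s i))) (orbit_join P n).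
Proof.
move=> fP sP; apply: bigjoin_coarsest.
  exact/fmpart_neq0/fmpart_orbit_join.
move=> i lt_in; apply: coarser_trans (ppre_coarser _ (sP i)) _.
exact: (coarser_bigjoin (fun i => ppre (iter i f) P)).
Qed.

Lemma admissible_dominated_seqs : admissible f dominated_seqs.
Proof.
have fT := fmpart_setT setT_neq0.
split.
- exists (fun=> [set setT]); split=> //.
  by exists [set setT] => // n; exact: coarser_refl.
- by move=> s [].
- move=> s [fs [P fP sP]]; have [cP eP] := (finite_seqP _).1 (fmpart_fin fP).
  by exists (size cP) => n; apply: coarser_fmpart_card fP (fs n) (sP n) eP.
- move=> s t [fs [P fP sP]] ft ts; split => //; exists P => // n.
  exact: coarser_trans (ts n) (sP n).
- move=> s m [fs [P fP sP]] _; split.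
    move=> k; apply: fmpart_bigjoin setT_neq0 _ => i.
    exact: fmpart_ppre_iter.
  exists (orbit_join P m); first exact: fmpart_orbit_join.
  by move=> k; apply: coarser_orbit_join.
Qed.

Lemma gen_class_dominated : gen_class f const_fmpart_seqs `<=` dominated_seqs.
Proof.
move=> s; apply; first exact: admissible_dominated_seqs.
by move=> _ [P fP ->]; split=> //; exists P => // n; exact: coarser_refl.
Qed.

Lemma seq_entropy_dominated {s} : dominated_seqs s ->
  exists2 P, is_fmpart P & (seq_entropy mu f s <= ks_entropy_part mu f P)%E.
Proof.
move=> [fs [P fP sP]]; exists P => //; rewrite -seq_entropy_const //.
apply: le_limn_esup => n; rewrite lee_fin.
apply: ler_wpM2l; first by rewrite invr_ge0.
apply: le_pentropy_coarser.
- by apply: fmpart_bigjoin setT_neq0 _ => i; exact: fmpart_ppre_iter.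
- exact: fmpart_orbit_join.
- exact: coarser_orbit_join.
Qed.

End InvariantMeasure.

Theorem mainTheorem12 (d : measure_display) (T : measurableType d)
  (R : realType) (mu : probability T R) (f : T -> T)
  (mf : measurable_fun setT f)
  (finv : forall A : set T, measurable A -> mu (f @^-1` A) = mu A) :
  class_entropy mu f (gen_class f (@const_fmpart_seqs d T)) =
  ks_entropy mu f.
Proof.
apply/eqP; rewrite eq_le; apply/andP; split.
  apply: ge_ereal_sup => _ [s /(gen_class_dominated mu f mf) Ds <-].
  have [P fP sP] := seq_entropy_dominated mu f mf finv Ds.
  by apply: le_trans sP _; apply: ereal_sup_ubound; exists P.
apply: ge_ereal_sup => _ [P fP <-].
rewrite -(seq_entropy_const mu f mf finv fP).
by apply: ereal_sup_ubound; exists (fun=> P) => // E _; apply; exists P.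
Qed.
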